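(* Let $1\le n<N$. Then for all $\epsilon>0$, \[ \Pr\Big(\max_{n\le k\le N-1}\frac{\sum_{t=1}^k (X_t-\mu)}{k}\ge \epsilon\Big)\le \exp\Big(-\frac{2n\epsilon^2}{(1-n/N)(1+1/n)(b-a)^2}\Big), \] and \[ \Pr\Big(\max_{1\le k\le n}\frac{\sum_{t=1}^k (X_t-\mu)}{N-k}\ge \frac{n\epsilon}{N-n}\Big)\le \exp\Big(-\frac{2n\epsilon^2}{(1-(n-1)/N)(b-a)^2}\Big). \]
   Context: Let $N\ge 2$ and let $\mathcal X=(x_1,\dots,x_N)$ be a finite population of real numbers (repetitions allowed). Let $(X_1,\dots,X_N)=(x_{\pi(1)},\dots,x_{\pi(N)})$, where $\pi$ is a uniformly random permutation of $\{1,\dots,N\}$. For $n\le N$, $(X_1,\dots,X_n)$ is therefore a sample of size $n$ drawn uniformly without replacement from $\mathcal X$. Let $\mu=\frac1N\sum_{i=1}^N x_i$, $a=\min_i x_i$ and $b=\max_i x_i$. *)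

From Stdlib Require Import Reals ClassicalEpsilon.
From mathcomp Require Import all_boot all_fingroup.
Set Implicit Arguments. Unset Strict Implicit. Unset Printing Implicit Defensive.
Open Scope R_scope.

Definition pbool (P : Prop) : bool :=
  if excluded_middle_informative P then true else false.

(* Probability of an event E under a uniformly random permutation of 'I_N:
   (number of permutations satisfying E) / N!. *)
Definition Prob (N : nat) (E : {perm 'I_N} -> Prop) : R :=
  (INR #|[pred s : {perm 'I_N} | pbool (E s)]| / INR (N`!)).

Definition pmean (N : nat) (x : 'I_N -> R) : R :=
  (\big[Rplus/0]_(i : 'I_N) x i / INR N).

(* Centered partial sum: sum_{t=1}^k (X_t - mu) with X_t = x (s (t-1)). *)
Definition psum (N : nat) (x : 'I_N -> R) (s : {perm 'I_N}) (k : nat) : R :=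
  \big[Rplus/0]_(i : 'I_N | (i < k)%N) (x (s i) - pmean x).

From Stdlib Require Import Reals Lra.
From Coquelicot Require Import Coquelicot.
From HB Require Import structures.
From mathcomp Require Import all_boot all_fingroup zify.
Open Scope R_scope.

(* Centre the population, d_i = x_i - mu, so that sum_i d_i = 0, and let S_k be the
   sum of the first k draws.  Z_k = S_k / (N - k) is a martingale (it is minus the mean
   of the undrawn values), and given the first k draws the increment Z_{k+1} - Z_k is a
   centred variable, uniform over N - k values in an interval of length
   (b - a) / (N - k - 1).  By Hoeffding's lemma the process
   exp (l (Z_k - c) + l^2 (b - a)^2 / 8 * sum_{k < j <= M} 1 / (N - j)^2)
   is therefore a supermartingale, and optional stopping at the first time Z_k >= c,
   carried out as a backward induction over the prefixes of the permutation, bounds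
   P(max_{k <= M} Z_k >= c).  Optimising l and bounding the sum of inverse squares
   gives the second inequality with M = n; the first one follows by reading the
   permutation backwards, which exchanges sum_{t <= k} (X_t - mu) with
   - sum_{t > k} (X_t - mu), and applying the same bound to -x with M = N - n. *)

Lemma nondecreasing_from_deriv (f df : R -> R) (t : R) : 0 <= t ->
  (forall y, is_derive f y (df y)) -> (forall y, 0 <= y -> 0 <= df y) ->
  f 0 <= f t.
Proof.
move=> Ht Hf Hdf.
have Hcont y : continuity_pt f y.
  apply/continuity_pt_filterlim/(ex_derive_continuous (K := R_AbsRing)).
  by exists (df y).
have [c [Hc Hmvt]] := MVT_gen f 0 t df (fun y _ => Hf y) (fun y _ => Hcont y).
rewrite Rmin_left ?Rmax_right in Hc; try lra.
have : 0 <= df c * (t - 0) by apply: Rmult_le_pos; [apply: Hdf|]; lra.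
lra.
Qed.

Section TwoPointHoeffding.
(* Hoeffding's lemma for the centred law on the two points lo <= 0 <= hi; by convexity
   of the exponential this law has the largest moment generating function among all
   centred laws on [lo, hi]. *)
Variables lo hi : R.
Hypotheses (Hlo : lo <= 0) (Hhi : 0 <= hi) (Hlohi : lo < hi).

(* The centred two-point law has mass hi/(hi-lo) at lo and -lo/(hi-lo) at hi;
   these are the two terms of its moment generating function at l. *)
Definition tilt_lo (l : R) : R := hi * exp (l * lo) / (hi - lo).
Definition tilt_hi (l : R) : R := - lo * exp (l * hi) / (hi - lo).
Definition mgf2 (l : R) : R := tilt_lo l + tilt_hi l.

Lemma mgf2_num_pos l : 0 < hi * exp (l * lo) + - lo * exp (l * hi).
Proof.
have := exp_pos (l * lo); have := exp_pos (l * hi).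
by case: (Rle_lt_or_eq_dec 0 hi Hhi) => [Hpos|Hz]; [nra | subst hi; nra].
Qed.

Lemma mgf2_pos l : 0 < mgf2 l.
Proof.
rewrite /mgf2 /tilt_lo /tilt_hi -Rdiv_plus_distr.
by apply: Rdiv_lt_0_compat; [apply: mgf2_num_pos | lra].
Qed.

Lemma mgf2_0 : mgf2 0 = 1.
Proof. by rewrite /mgf2 /tilt_lo /tilt_hi !Rmult_0_l exp_0; field; lra. Qed.

(* The derivative of log (mgf2 l), i.e. the mean of the tilted law, grows at most
   like l (hi - lo)^2 / 4: the tilted law lives on an interval of length hi - lo,
   so its variance is at most (hi - lo)^2 / 4. *)
Lemma tilted_mean_le l : 0 <= l ->
  (lo * tilt_lo l + hi * tilt_hi l) / mgf2 l <= l * (hi - lo) ^ 2 / 4.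
Proof.
move=> Hl.
pose q y := y * (hi - lo) ^ 2 / 4 - (lo * tilt_lo y + hi * tilt_hi y) / mgf2 y.
pose dq y := (hi - lo) ^ 2 / 4 - tilt_lo y * tilt_hi y * (hi - lo) ^ 2 / mgf2 y ^ 2.
suff : q 0 <= q l.
  have -> : q 0 = 0 by rewrite /q mgf2_0 /tilt_lo /tilt_hi !Rmult_0_l exp_0; field; lra.
  by rewrite /q; lra.
apply: (nondecreasing_from_deriv q dq) => // [y|y _].
- have := mgf2_num_pos y; rewrite /q /dq /mgf2 /tilt_lo /tilt_hi => Hpos.
  auto_derive; first by have := mgf2_pos y; rewrite /mgf2 /tilt_lo /tilt_hi /Rdiv; lra.
  by field; lra.
- have Hm := mgf2_pos y.
  have Hratio : tilt_lo y * tilt_hi y / mgf2 y ^ 2 <= 1 / 4.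
    apply/Rle_div_l; first exact: pow_lt.
    by rewrite /mgf2; have := pow2_ge_0 (tilt_lo y - tilt_hi y); nra.
  have -> : dq y = (hi - lo) ^ 2 * (1 / 4 - tilt_lo y * tilt_hi y / mgf2 y ^ 2).
    by rewrite /dq; field; lra.
  by apply: Rmult_le_pos; [apply: pow2_ge_0 | lra].
Qed.

Lemma mgf2_le l : 0 <= l -> mgf2 l <= exp (l ^ 2 * (hi - lo) ^ 2 / 8).
Proof.
move=> Hl.
pose g y := - (mgf2 y * exp (- (y ^ 2 * (hi - lo) ^ 2 / 8))).
pose dg y := mgf2 y * (y * (hi - lo) ^ 2 / 4 - (lo * tilt_lo y + hi * tilt_hi y) / mgf2 y)
             * exp (- (y ^ 2 * (hi - lo) ^ 2 / 8)).
have : g 0 <= g l.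
  apply: (nondecreasing_from_deriv g dg) => // [y|y Hy].
  - have := mgf2_num_pos y; rewrite /g /dg /mgf2 /tilt_lo /tilt_hi => Hpos.
    auto_derive; first by have := mgf2_pos y; rewrite /mgf2 /tilt_lo /tilt_hi /Rdiv; lra.
    have -> : - (y * (y * 1) * ((hi - lo) * ((hi - lo) * 1)) * / 8)
            = - (y ^ 2 * (hi - lo) ^ 2 / 8) by field.
    by field; lra.
  - apply: Rmult_le_pos; last exact/Rlt_le/exp_pos.
    apply: Rmult_le_pos; first exact/Rlt_le/mgf2_pos.
    by have := tilted_mean_le y Hy; lra.
have -> : g 0 = - 1.
  by rewrite /g mgf2_0 (_ : - (0 ^ 2 * (hi - lo) ^ 2 / 8) = 0) ?exp_0; [ring | field].
rewrite /g exp_Ropp => Hg.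
have He := exp_pos (l ^ 2 * (hi - lo) ^ 2 / 8).
apply: (Rmult_le_reg_r (/ exp (l ^ 2 * (hi - lo) ^ 2 / 8))); first exact: Rinv_0_lt_compat.
by rewrite Rinv_r; lra.
Qed.

End TwoPointHoeffding.

Lemma exp_le_chord (l lo hi v : R) : lo < hi -> lo <= v <= hi ->
  exp (l * v) <= ((hi - v) * exp (l * lo) + (v - lo) * exp (l * hi)) / (hi - lo).
Proof.
move=> Hlohi Hv.
set t := (v - lo) / (hi - lo).
have Ht : 0 <= t <= 1.
  by rewrite /t; split; [apply: Rdiv_le_0_compat | apply/Rle_div_l]; lra.
(* Both endpoints lie above the tangent line of exp at l * v. *)
have tangent y : exp (l * v) * (1 + (y - l * v)) <= exp y.
  have -> : exp y = exp (l * v) * exp (y - l * v) by rewrite -exp_plus; f_equal; ring.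
  by apply: Rmult_le_compat_l; [exact/Rlt_le/exp_pos | apply: exp_ineq1_le].
have Tlo := tangent (l * lo); have Thi := tangent (l * hi).
have -> : ((hi - v) * exp (l * lo) + (v - lo) * exp (l * hi)) / (hi - lo)
        = (1 - t) * exp (l * lo) + t * exp (l * hi) by rewrite /t; field; lra.
have -> : exp (l * v) = (1 - t) * (exp (l * v) * (1 + (l * lo - l * v)))
                        + t * (exp (l * v) * (1 + (l * hi - l * v))) by rewrite /t; field; lra.
by apply: Rplus_le_compat; apply: Rmult_le_compat_l; lra.
Qed.

HB.instance Definition _ := Monoid.isComLaw.Build R 0 Rplus
  (fun a b c => esym (Rplus_assoc a b c)) Rplus_comm Rplus_0_l.
HB.instance Definition _ := Monoid.isMulLaw.Build R 0 Rmult Rmult_0_l Rmult_0_r.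
HB.instance Definition _ := Monoid.isAddLaw.Build R Rmult Rplus
  Rmult_plus_distr_r Rmult_plus_distr_l.

Lemma sumR_const (I : finType) (P : pred I) (c : R) :
  \big[Rplus/0]_(i | P i) c = INR #|P| * c.
Proof.
rewrite (big_const 0 Rplus P); elim: #|P| => [|k IH]; first by rewrite /= Rmult_0_l.
by rewrite iterS IH S_INR; ring.
Qed.

Lemma sumR_const_all (I : finType) (c : R) : \big[Rplus/0]_(i : I) c = INR #|I| * c.
Proof. by rewrite sumR_const; congr (INR _ * _); apply: eq_card. Qed.

Lemma sumR_le {I : finType} {P : pred I} {f g : I -> R} :
  (forall i, P i -> f i <= g i) ->
  \big[Rplus/0]_(i | P i) f i <= \big[Rplus/0]_(i | P i) g i.
Proof.
by move=> Hfg; apply: (big_ind2 (fun u v => u <= v)) => // *; lra.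
Qed.

Lemma INR_sum (I : finType) (P : pred I) (f : I -> nat) :
  INR (\sum_(i | P i) f i)%N = \big[Rplus/0]_(i | P i) INR (f i).
Proof. exact: (big_morph INR plus_INR). Qed.

Lemma hoeffding_finite {I : finType} (P : pred I) (v : I -> R) {lo hi : R} (l : R) :
  lo < hi -> 0 <= l -> (forall i, P i -> lo <= v i <= hi) ->
  \big[Rplus/0]_(i | P i) v i = 0 ->
  \big[Rplus/0]_(i | P i) exp (l * v i) <= INR #|P| * exp (l ^ 2 * (hi - lo) ^ 2 / 8).
Proof.
move=> Hlohi Hl Hv Hsum.
have [P0|Ppos] := posnP #|P|.
  rewrite big_pred0 ?P0 /=; first lra.
  by move=> i; apply/negbTE; rewrite -[P i]/(i \in P) (card0_eq P0).
have HP : 0 < INR #|P| by apply: lt_0_INR; apply/ltP.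
have Hlo : lo <= 0.
  have : \big[Rplus/0]_(i | P i) lo <= \big[Rplus/0]_(i | P i) v i.
    by apply: sumR_le => i /Hv; lra.
  by rewrite Hsum sumR_const; nra.
have Hhi : 0 <= hi.
  have : \big[Rplus/0]_(i | P i) v i <= \big[Rplus/0]_(i | P i) hi.
    by apply: sumR_le => i /Hv; lra.
  by rewrite Hsum sumR_const; nra.
set k := (exp (l * hi) - exp (l * lo)) / (hi - lo).
apply: (Rle_trans _ (\big[Rplus/0]_(i | P i) (mgf2 lo hi l + k * v i))).
  apply: sumR_le => i /Hv Hi; apply: (Rle_trans _ _ _ (exp_le_chord l lo hi (v i) Hlohi Hi)).
  by rewrite /mgf2 /tilt_lo /tilt_hi /k; right; field; lra.
rewrite big_split /= -big_distrr /= Hsum sumR_const Rmult_0_r Rplus_0_r.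
by apply: Rmult_le_compat_l; [lra | apply: mgf2_le].
Qed.

Section PrefixCounting.
(* A permutation s of 'I_N is read as the sequence of draws s 0, ..., s (N - 1);
   permutations are counted according to their first draws. *)
Context {N : nat}.

Definition draws (s : {perm 'I_N}) : seq 'I_N := [seq s i | i <- enum 'I_N].

Lemma size_draws s : size (draws s) = N.
Proof. by rewrite /draws size_map size_enum_ord. Qed.

Lemma uniq_draws s : uniq (draws s).
Proof. by rewrite /draws map_inj_uniq ?enum_uniq //; apply: perm_inj. Qed.

Definition nprefix (p : seq 'I_N) (Q : pred {perm 'I_N}) : nat :=
  #|[pred s | (take (size p) (draws s) == p) && Q s]|.

Lemma nprefix_nil : nprefix [::] xpredT = N`!.
Proof. by rewrite /nprefix -card_Sn; apply: eq_card => s; rewrite !inE take0. Qed.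

Lemma nprefix_le p Q : (nprefix p Q <= nprefix p xpredT)%N.
Proof. by apply: subset_leq_card; apply/subsetP => s; rewrite !inE andbT => /andP []. Qed.

Lemma nprefix_rcons p Q : (size p < N)%N ->
  nprefix p Q = (\sum_(i : 'I_N) nprefix (rcons p i) Q)%N.
Proof.
move=> Hp; pose x0 := Ordinal Hp.
rewrite /nprefix -sum1_card (partition_big (fun s => nth x0 (draws s) (size p)) xpredT) //=.
apply: eq_bigr => i _; rewrite -sum1_card size_rcons; apply: eq_bigl => s.
rewrite !inE (take_nth x0) ?size_draws // eqseq_rcons.
by case: (take _ _ == p); case: (Q s); case: (_ == i).
Qed.

Lemma nprefix_dup {p i Q} : i \in p -> nprefix (rcons p i) Q = 0%N.
Proof.
move=> Hi; rewrite /nprefix -sum1_card big_pred0 // => s; rewrite inE.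
apply/negP => /andP [/eqP E _].
by have := take_uniq (size (rcons p i)) (uniq_draws s); rewrite E rcons_uniq Hi.
Qed.

(* Exchanging two undrawn values (composing with a transposition) shows that
   every undrawn value is equally likely to be drawn next. *)
Lemma nprefix_swap {p i j} : i \notin p -> j \notin p ->
  nprefix (rcons p i) xpredT = nprefix (rcons p j) xpredT.
Proof.
move=> Hi Hj.
rewrite /nprefix -!sum1_card (reindex_inj (mulIg (tperm i j))) /=.
apply: eq_bigl => s; rewrite !inE !andbT !size_rcons.
have -> : draws (s * tperm i j) = [seq tperm i j k | k <- draws s].
  by rewrite /draws; elim: (enum 'I_N) => //= k r ->; rewrite permM.
have map_tpermE (u w : seq 'I_N) :
    ([seq tperm i j k | k <- u] == w) = (u == [seq tperm i j k | k <- w]).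
  by apply/eqP/eqP => [<-|->]; rewrite (mapK (tpermK i j)).
rewrite -map_take map_tpermE map_rcons tpermL.
congr (_ == rcons _ _); rewrite -[RHS]map_id; apply/eq_in_map => k Hk /=.
by apply: tpermD; apply/eqP => E; subst k; [rewrite Hk in Hi | rewrite Hk in Hj].
Qed.

Lemma card_notin {p : seq 'I_N} : uniq p -> #|[pred i : 'I_N | i \notin p]| = (N - size p)%N.
Proof.
move=> Hu; have H := cardC (mem p); rewrite card_ord (card_uniqP Hu) in H.
move: H; set k := #|[predC _]| => H.
apply: (@addnI (size p)); rewrite H subnKC //.
by move: (leq_addr k (size p)); rewrite H.
Qed.

Lemma exists_fresh {p : seq 'I_N} : uniq p -> (size p < N)%N -> exists i, i \notin p.
Proof.
move=> Hu Hp; have : (0 < #|[pred i : 'I_N | i \notin p]|)%N by rewrite card_notin // subn_gt0.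
by case/card_gt0P => i; exists i.
Qed.

Lemma nprefix_fresh {p i} : uniq p -> i \notin p ->
  INR (nprefix p xpredT) = INR (N - size p) * INR (nprefix (rcons p i) xpredT).
Proof.
move=> Hu Hi.
have Hp : (size p < N)%N.
  by rewrite -subn_gt0 -card_notin //; apply/card_gt0P; exists i.
rewrite (nprefix_rcons p xpredT Hp) INR_sum (bigID (fun j => j \in p)) /=.
rewrite big1 ?Rplus_0_l => [|j Hj]; last by rewrite nprefix_dup.
rewrite (eq_bigr (fun _ => INR (nprefix (rcons p i) xpredT))) => [|j Hj].
  by rewrite sumR_const -card_notin.
by rewrite (nprefix_swap Hj Hi).
Qed.

End PrefixCounting.

(* vproxy N m = sum_{j=1..m} 1 / (N - j)^2.  Up to the factor (b - a)^2 / 4, it bounds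
   the accumulated conditional variance of the martingale S_k / (N - k) after m draws. *)
Fixpoint vproxy (N m : nat) : R :=
  match m with 0%N => 0 | m'.+1 => vproxy N m' + 1 / INR (N - m) ^ 2 end.

Lemma vproxyS N m : vproxy N m.+1 = vproxy N m + 1 / INR (N - m.+1) ^ 2.
Proof. by []. Qed.

Lemma vproxy_mono N m m' : (m <= m')%N -> vproxy N m <= vproxy N m'.
Proof.
move=> Hm; rewrite -(subnKC Hm); elim: (m' - m)%N => [|k IH]; first by rewrite addn0; lra.
rewrite addnS vproxyS; apply: (Rle_trans _ _ _ IH).
have : 0 <= 1 / INR (N - (m + k).+1) ^ 2 by rewrite /Rdiv Rmult_1_l -pow_inv; apply: pow2_ge_0.
lra.
Qed.

Lemma vproxy_pos N M : (1 <= M)%N -> (M < N)%N -> 0 < vproxy N M.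
Proof.
move=> H1 H2; apply: (Rlt_le_trans _ (vproxy N 1)); last exact: vproxy_mono.
rewrite vproxyS Rplus_0_l; apply: Rdiv_lt_0_compat; first lra.
by apply: pow_lt; apply: lt_0_INR; apply/ltP; lia.
Qed.

Lemma pboolP (P : Prop) : reflect P (pbool P).
Proof. by rewrite /pbool; case: ClassicalEpsilon.excluded_middle_informative => H; constructor. Qed.

Lemma pbool_iff (A B : Prop) : (A <-> B) -> pbool A = pbool B.
Proof. by move=> H; case: pboolP => HA; case: pboolP => HB //; tauto. Qed.

Lemma exp_le x y : x <= y -> exp x <= exp y.
Proof. by case/Rle_lt_or_eq_dec => [/exp_increasing|->]; lra. Qed.

Section MaximalInequality.
Variable N : nat.
Variable d : 'I_N -> R.
Variables lo hi : R.
Hypothesis Hd : forall i, lo <= d i <= hi.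
Hypothesis Hlohi : lo < hi.
Hypothesis Hsum : \big[Rplus/0]_(i : 'I_N) d i = 0.
Variable M : nat.
Hypothesis HM : (M < N)%N.
Variables c l : R.
Hypothesis Hl : 0 <= l.

Definition prefix_sum (p : seq 'I_N) : R := \big[Rplus/0]_(i <- p) d i.

Definition exceeds (m : nat) (s : {perm 'I_N}) : Prop :=
  exists k, (m < k <= M)%N /\ prefix_sum (take k (draws s)) / INR (N - k) >= c.

(* The exponential supermartingale exp (l (Z_m - c) + l^2 (hi-lo)^2/8 (V_M - V_m)),
   evaluated when S_m = z. *)
Definition potential (m : nat) (z : R) : R :=
  exp (l * (z / INR (N - m) - c) + l ^ 2 * (hi - lo) ^ 2 / 8 * (vproxy N M - vproxy N m)).

Lemma potential_ge1 m z : (m <= M)%N -> z / INR (N - m) >= c -> 1 <= potential m z.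
Proof.
move=> Hm Hz; rewrite -exp_0; apply: exp_le.
have := vproxy_mono N m M Hm.
have : 0 <= l ^ 2 * (hi - lo) ^ 2 / 8.
  by apply: Rmult_le_pos; [apply: Rmult_le_pos; apply: pow2_ge_0 | lra].
have : 0 <= l * (z / INR (N - m) - c) by apply: Rmult_le_pos; lra.
nra.
Qed.

Lemma sum_undrawn p : uniq p ->
  \big[Rplus/0]_(i | i \notin p) d i = - prefix_sum p.
Proof.
move=> Hu; move: Hsum; rewrite (bigID (fun i => i \in p)) /= -big_uniq // => H.
apply: (Rplus_eq_reg_l (prefix_sum p)); rewrite Rplus_opp_r; exact: H.
Qed.

(* Hoeffding's lemma for the increment of Z: given the first draws p, drawing i
   moves Z from S / (r + 1) to (S + d i) / r, where r + 1 = N - size p; these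
   increments are centred over the undrawn i and range over an interval of length
   (hi - lo) / r. *)
Lemma increment_mgf p : uniq p -> ((size p).+1 < N)%N ->
  let r := INR (N - (size p).+1) in
  \big[Rplus/0]_(i | i \notin p) exp (l * ((prefix_sum p + d i) / r - prefix_sum p / (r + 1)))
  <= (r + 1) * exp (l ^ 2 * (hi - lo) ^ 2 / 8 / r ^ 2).
Proof.
move=> Hu Hm r; set z := prefix_sum p.
have Hr : 0 < r by apply: lt_0_INR; apply/ltP; rewrite subn_gt0.
have Er : INR (N - size p) = r + 1 by rewrite /r -S_INR; congr INR; lia.
have Ecard : INR #|[pred i : 'I_N | i \notin p]| = r + 1 by rewrite card_notin.
pose v i := (z + d i) / r - z / (r + 1).
set vlo := (z + lo) / r - z / (r + 1).
set vhi := (z + hi) / r - z / (r + 1).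
have Hvlohi : vlo < vhi.
  by rewrite /vlo /vhi; apply/Rplus_lt_compat_r/Rmult_lt_compat_r;
    [apply: Rinv_0_lt_compat | lra].
have Hv i : i \notin p -> vlo <= v i <= vhi.
  have /Rinv_0_lt_compat/Rlt_le Hr' := Hr; have := Hd i.
  by rewrite /vlo /vhi /v; split; apply/Rplus_le_compat_r/Rmult_le_compat_r; lra.
have Hvsum : \big[Rplus/0]_(i | i \notin p) v i = 0.
  have Ev i : v i = (z / r - z / (r + 1)) + d i * / r by rewrite /v; field; lra.
  rewrite (eq_bigr _ (fun i _ => Ev i)) big_split /= -big_distrl /= sum_undrawn //.
  by rewrite sumR_const Ecard -/z; field; lra.
have := hoeffding_finite (fun i => i \notin p) v l Hvlohi Hl Hv Hvsum.
rewrite Ecard (_ : l ^ 2 * (vhi - vlo) ^ 2 / 8 = l ^ 2 * (hi - lo) ^ 2 / 8 / r ^ 2) //.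
by rewrite /vhi /vlo; field; lra.
Qed.

Lemma potential_step p : uniq p -> ((size p).+1 < N)%N ->
  \big[Rplus/0]_(i | i \notin p) potential (size p).+1 (prefix_sum p + d i)
  <= INR (N - size p) * potential (size p) (prefix_sum p).
Proof.
move=> Hu Hm; have := increment_mgf p Hu Hm.
set m := size p; set z := prefix_sum p; set r := INR (N - m.+1) => Hinc.
have Hr : 0 < r by apply: lt_0_INR; apply/ltP; rewrite subn_gt0.
have Er : INR (N - m) = r + 1 by rewrite /r -S_INR; congr INR; rewrite /m; lia.
(* The damping factor exp (-A) exactly compensates Hoeffding's bound exp A. *)
set A := l ^ 2 * (hi - lo) ^ 2 / 8 / r ^ 2.
have Epot i : potential m.+1 (z + d i)
    = potential m z * exp (- A) * exp (l * ((z + d i) / r - z / (r + 1))).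
  by rewrite /potential -!exp_plus /= Er -/r /A; congr exp; field; lra.
rewrite (eq_bigr _ (fun i _ => Epot i)) -big_distrr /= Er.
have HP : 0 <= potential m z * exp (- A).
  by apply/Rlt_le/Rmult_lt_0_compat; apply: exp_pos.
apply: (Rle_trans _ _ _ (Rmult_le_compat_l _ _ _ HP Hinc)).
by rewrite exp_Ropp -/A; have := exp_pos A; right; field; lra.
Qed.

Lemma exceeds_none s : ~ exceeds M s.
Proof. by move=> [k [/andP [H1 H2] _]]; have := leq_ltn_trans H2 H1; rewrite ltnn. Qed.

Lemma exceeds_next m s : (m < M)%N ->
  exceeds m s <->
  prefix_sum (take m.+1 (draws s)) / INR (N - m.+1) >= c \/ exceeds m.+1 s.
Proof.
move=> Hm; split.
  move=> [k [/andP [H1 H2] H3]].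
  case: (eqVneq k m.+1) => [<-|Nk]; first by left.
  right; exists k; split => //; apply/andP; split => //.
  by rewrite ltn_neqAle eq_sym Nk H1.
case=> [H|[k [/andP [H1 H2] H3]]]; first by exists m.+1; split => //; apply/andP.
by exists k; split => //; apply/andP; split => //; apply: ltnW.
Qed.

Definition nexceed (p : seq 'I_N) : nat :=
  nprefix p (fun s => pbool (exceeds (size p) s)).

(* Optional stopping, by backward induction on the number j = M - size p of
   remaining steps: among the permutations extending p, the proportion of those on
   which Z later reaches c is at most the current potential. *)
Lemma maximal_prefix j : forall p : seq 'I_N, uniq p -> (size p + j)%N = M ->
  INR (nexceed p) <= INR (nprefix p xpredT) * potential (size p) (prefix_sum p).
Proof.
elim: j => [|j IH] p Hu Hs.
  rewrite /nexceed /nprefix (_ : #|_| = 0%N) /=; last first.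
    rewrite -sum1_card big_pred0 // => s; rewrite inE -[size p]addn0 Hs.
    by case: pboolP => [/exceeds_none|]; rewrite ?andbF.
  by apply: Rmult_le_pos; [apply: pos_INR | exact/Rlt_le/exp_pos].
set m := size p; set z := prefix_sum p.
have Hm : (m < M)%N by rewrite -Hs addnS ltnS leq_addr.
have Hm1 : (m.+1 < N)%N := leq_ltn_trans Hm HM.
have [i0 Hi0] := exists_fresh Hu (ltnW Hm1).
(* After one more draw i, either Z_{m+1} >= c already, or the event is the one
   for the longer prefix rcons p i, which is bounded by induction. *)
have Hnext i : i \notin p ->
    INR (nprefix (rcons p i) (fun s => pbool (exceeds m s)))
    <= INR (nprefix (rcons p i) xpredT) * potential m.+1 (z + d i).
  move=> Hi.
  have Ez : prefix_sum (rcons p i) = z + d i by rewrite /prefix_sum big_rcons.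
  case: (Rge_dec ((z + d i) / INR (N - m.+1)) c) => Hc.
    have := potential_ge1 m.+1 (z + d i) Hm Hc; have := pos_INR (nprefix (rcons p i) xpredT).
    have /leP/le_INR := nprefix_le (rcons p i) (fun s => pbool (exceeds m s)).
    nra.
  have -> : nprefix (rcons p i) (fun s => pbool (exceeds m s)) = nexceed (rcons p i).
    rewrite /nexceed /nprefix size_rcons; apply: eq_card => s; rewrite !inE.
    case E: (take m.+1 (draws s) == rcons p i) => //=.
    by apply: pbool_iff; rewrite exceeds_next // (eqP E) Ez; tauto.
  by have := IH (rcons p i); rewrite size_rcons Ez rcons_uniq Hi Hu addSnnS; apply.
rewrite /nexceed (nprefix_rcons p _ (ltnW Hm1)) INR_sum (bigID (fun i => i \in p)) /=.
rewrite big1 ?Rplus_0_l => [|i Hi]; last by rewrite nprefix_dup.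
apply: (Rle_trans _ _ _ (sumR_le Hnext)).
rewrite (eq_bigr (fun i => INR (nprefix (rcons p i0) xpredT) * potential m.+1 (z + d i)));
  last by move=> i Hi; rewrite (nprefix_swap Hi Hi0).
rewrite -big_distrr /= (nprefix_fresh Hu Hi0).
apply: (Rle_trans _ (INR (nprefix (rcons p i0) xpredT) * (INR (N - m) * potential m z))).
  by apply: Rmult_le_compat_l; [apply: pos_INR | exact: potential_step].
by rewrite -/m -Rmult_assoc [X in X * _ <= _]Rmult_comm; right.
Qed.

End MaximalInequality.

Arguments prefix_sum {N} d p.
Arguments nexceed {N} d M c p.
Arguments maximal_prefix {N d lo hi} Hd Hlohi Hsum {M} HM c {l} Hl j p.

Lemma sum_centered N (x : 'I_N -> R) : (0 < N)%N ->
  \big[Rplus/0]_(i : 'I_N) (x i - pmean x) = 0.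
Proof.
move=> HN; have HNR : 0 < INR N by apply: lt_0_INR; apply/ltP.
have cancel y : y + INR N * - (y / INR N) = 0 by field; lra.
by rewrite /Rminus big_split /= sumR_const_all card_ord /pmean; apply: cancel.
Qed.

Lemma psum_draws N (x : 'I_N -> R) s k : (k <= N)%N ->
  psum x s k = prefix_sum (fun i => x i - pmean x) (take k (draws s)).
Proof.
move=> Hk; rewrite /prefix_sum /draws -map_take big_map.
have -> : take k (enum 'I_N) = [seq i : 'I_N <- enum 'I_N | (i < k)%N].
  apply: (@inj_map _ _ (@nat_of_ord N) val_inj).
  rewrite map_take val_enum_ord take_iota (minn_idPl Hk).
  rewrite (@eq_filter _ _ (preim (@nat_of_ord N) (fun j => (j < k)%N))) //.
  rewrite -filter_map val_enum_ord.
  exact/esym/(filter_iota_ltn 0 Hk).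
by rewrite big_filter /psum big_enum_cond.
Qed.

(* Maximal inequality for the martingale S_k / (N - k) (Serfling-type bound), with
   the exponent expressed through vproxy; obtained from maximal_prefix at the empty
   prefix with the optimal l = 4 c / ((b - a)^2 vproxy N M). *)
Lemma maximal_bound N (x : 'I_N -> R) (a b : R) (M : nat) (c : R) :
  a < b -> (forall i, a <= x i <= b) -> (1 <= M)%N -> (M < N)%N -> 0 < c ->
  Prob (fun s : {perm 'I_N} => exists k, (1 <= k <= M)%N /\ psum x s k / INR (N - k) >= c)
  <= exp (- (2 * c ^ 2 / ((b - a) ^ 2 * vproxy N M))).
Proof.
move=> Hab Hx HM1 HM Hc.
set mu := pmean x; pose d i := x i - mu.
have Hd i : a - mu <= d i <= b - mu by have := Hx i; rewrite /d; lra.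
have HV := vproxy_pos N M HM1 HM.
have Hw : 0 < (b - a) ^ 2 by apply: pow_lt; lra.
pose l := 4 * c / ((b - a) ^ 2 * vproxy N M).
have Hl : 0 <= l by apply/Rlt_le/Rdiv_lt_0_compat; [lra | apply: Rmult_lt_0_compat].
have Hlohi : a - mu < b - mu by lra.
have := maximal_prefix Hd Hlohi (sum_centered N x (ltnW (leq_ltn_trans HM1 HM)))
  HM c Hl M [::] (erefl _) (erefl _).
have -> : nexceed d M c [::] =
  #|[pred s : {perm 'I_N} | pbool (exists k, (1 <= k <= M)%N /\ psum x s k / INR (N - k) >= c)]|.
  rewrite /nexceed /nprefix; apply: eq_card => s; rewrite !inE take0 eqxx /=.
  apply: pbool_iff; rewrite /exceeds; split => -[k [Hk H]]; exists k; split => //;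
    rewrite ?psum_draws // in H *; lia.
rewrite nprefix_nil /potential /= => Hcore.
have Hf : 0 < INR N`! by apply: lt_0_INR; apply/ltP; apply: fact_gt0.
rewrite /Prob; apply/Rle_div_l => //; apply: (Rle_trans _ _ _ Hcore).
rewrite Rmult_comm; right; congr (exp _ * _).
have HN : 0 < INR (N - 0) by apply: lt_0_INR; apply/ltP; lia.
rewrite /prefix_sum big_nil /l (_ : b - mu - (a - mu) = b - a); last ring.
by field; lra.
Qed.

Fixpoint inv_sq_sum (p L : nat) : R :=
  match L with 0%N => 0 | L'.+1 => inv_sq_sum p L' + 1 / INR (p + L') ^ 2 end.

Lemma inv_sq_sumS p L : inv_sq_sum p L.+1 = inv_sq_sum p L + 1 / INR (p + L) ^ 2.
Proof. by []. Qed.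

Lemma inv_sq_sum_bottom p L : inv_sq_sum p L.+1 = 1 / INR p ^ 2 + inv_sq_sum p.+1 L.
Proof.
elim: L => [|L IH]; first by rewrite inv_sq_sumS addn0 /=; ring.
by rewrite inv_sq_sumS IH inv_sq_sumS addnS -addSn; ring.
Qed.

Lemma vproxy_inv_sq_sum N m : (m <= N)%N -> vproxy N m = inv_sq_sum (N - m) m.
Proof.
elim: m => [|m IH] Hm //.
rewrite vproxyS IH ?inv_sq_sum_bottom; last exact: ltnW.
by rewrite (_ : (N - m.+1).+1 = N - m)%N; [ring | lia].
Qed.

Lemma inv_sq_sum_le p L : (1 <= p)%N ->
  inv_sq_sum p L <= INR L * (INR p + 1) / ((INR p + INR L) * INR p ^ 2).
Proof.
move=> Hp; have HP : 1 <= INR p by rewrite -/(INR 1); apply/le_INR/leP.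
elim: L => [|L IH]; first by rewrite /= /Rdiv !Rmult_0_l; lra.
rewrite inv_sq_sumS plus_INR S_INR.
have Hl := pos_INR L.
move: IH HP Hl; set P := INR p; set l := INR L => IH HP Hl; clearbody P l.
have gap : (l + 1) * (P + 1) / ((P + (l + 1)) * P ^ 2)
         - (l * (P + 1) / ((P + l) * P ^ 2) + 1 / (P + l) ^ 2)
         = l / (P * (P + l) ^ 2 * (P + l + 1)) by field; repeat split; lra.
have : 0 <= l / (P * (P + l) ^ 2 * (P + l + 1)).
  apply: Rdiv_le_0_compat => //.
  by apply: Rmult_lt_0_compat; [apply: Rmult_lt_0_compat; [lra | apply: pow_lt] | ]; lra.
lra.
Qed.

Lemma vproxy_le N M : (M < N)%N ->
  vproxy N M <= INR M * (INR (N - M) + 1) / (INR N * INR (N - M) ^ 2).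
Proof.
move=> HM; rewrite vproxy_inv_sq_sum; last exact: ltnW.
rewrite (_ : INR N = INR (N - M) + INR M); first by apply: inv_sq_sum_le; lia.
by rewrite -plus_INR; congr INR; lia.
Qed.

Lemma maximal_bound_explicit N (x : 'I_N -> R) (a b : R) (M : nat) (c : R) :
  a < b -> (forall i, a <= x i <= b) -> (1 <= M)%N -> (M < N)%N -> 0 < c ->
  Prob (fun s : {perm 'I_N} => exists k, (1 <= k <= M)%N /\ psum x s k / INR (N - k) >= c)
  <= exp (- (2 * c ^ 2 * INR N * INR (N - M) ^ 2
             / ((b - a) ^ 2 * INR M * (INR (N - M) + 1)))).
Proof.
move=> Hab Hx HM1 HM Hc.
apply: (Rle_trans _ _ _ (maximal_bound N x a b M c Hab Hx HM1 HM Hc)); apply: exp_le.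
have HV := vproxy_pos N M HM1 HM.
have Hw : 0 < (b - a) ^ 2 by apply: pow_lt; lra.
have HNM : 0 < INR (N - M) by apply: lt_0_INR; apply/ltP; lia.
have HMR : 0 < INR M by apply: lt_0_INR; apply/ltP.
have HN : 0 < INR N by apply: lt_0_INR; apply/ltP; lia.
have Hc2 : 0 < 2 * c ^ 2 by have := pow_lt c 2 Hc; lra.
set B := INR M * (INR (N - M) + 1) / (INR N * INR (N - M) ^ 2).
have -> : 2 * c ^ 2 * INR N * INR (N - M) ^ 2 / ((b - a) ^ 2 * INR M * (INR (N - M) + 1))
        = 2 * c ^ 2 / ((b - a) ^ 2 * B) by rewrite /B; field; repeat split; lra.
apply/Ropp_le_contravar/Rmult_le_compat_l; first lra.
apply: Rinv_le_contravar; first exact: Rmult_lt_0_compat.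
by apply: Rmult_le_compat_l; [lra | apply: vproxy_le].
Qed.

Lemma pmean_opp N (x : 'I_N -> R) : pmean (fun i => - x i) = - pmean x.
Proof.
rewrite /pmean -(big_morph Ropp Ropp_plus_distr Ropp_0).
by rewrite /Rdiv Ropp_mult_distr_l.
Qed.

(* Reading the draws backwards: for the negated population, the first m draws of
   the reversed permutation have the same centred sum as the first N - m draws of s
   (their complement has centred sum 0). *)
Lemma psum_reverse N (x : 'I_N -> R) (s : {perm 'I_N}) m : (0 < N)%N -> (m <= N)%N ->
  psum (fun i => - x i) (perm (@rev_ord_inj N) * s)%g m = psum x s (N - m).
Proof.
move=> HN Hm; rewrite /psum pmean_opp.
set mu := pmean x; pose D j := x (s j) - mu.
have ED i : - x ((perm (@rev_ord_inj N) * s)%g i) - - mu = - D (rev_ord i).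
  have opp_sub u v : - u - - v = - (u - v) by ring.
  by rewrite permM permE /D; apply: opp_sub.
rewrite (eq_bigr _ (fun i _ => ED i)) -(big_morph Ropp Ropp_plus_distr Ropp_0).
rewrite (reindex_inj (@rev_ord_inj N)) /= (eq_bigr D) => [|j _]; last by rewrite rev_ordK.
have Hrev : (fun j : 'I_N => (N - j.+1 < m)%N) =1 (fun j => ~~ (j < N - m)%N).
  by move=> j; have Hj := ltn_ord j; apply/idP/idP; lia.
rewrite (eq_bigl _ _ Hrev).
have Hall : \big[Rplus/0]_(j < N) D j = 0.
  rewrite /D (reindex_inj (@perm_inj _ s^-1)) /=.
  rewrite (eq_bigr (fun j => x j - mu)) => [|j _]; last by rewrite permKV.
  exact: sum_centered.
move: Hall; rewrite (bigID (fun j : 'I_N => (j < N - m)%N)) /= => H.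
have opp_eq u v : u + v = 0 -> - v = u by lra.
exact: opp_eq H.
Qed.

Lemma Prob_reverse N (x : 'I_N -> R) (n : nat) (eps : R) : (0 < N)%N -> (n <= N)%N ->
  Prob (fun s : {perm 'I_N} => exists k, (n <= k <= N.-1)%N /\ psum x s k / INR k >= eps)
  = Prob (fun s : {perm 'I_N} => exists k, (1 <= k <= N - n)%N /\
            psum (fun i => - x i) s k / INR (N - k) >= eps).
Proof.
move=> HN Hn; rewrite /Prob; congr (INR _ / _).
rewrite -!sum1_card [RHS](reindex_inj (mulgI (perm (@rev_ord_inj N)))) /=.
apply: eq_bigl => s; rewrite !inE; apply: pbool_iff; split.
  move=> [k [Hk H]]; exists (N - k)%N; split; first by lia.
  by rewrite psum_reverse ?subKn //; lia.
move=> [m [Hm H]]; exists (N - m)%N; split; first by lia.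
by rewrite -psum_reverse //; lia.
Qed.

Lemma Prob_le1 N (E : {perm 'I_N} -> Prop) : Prob E <= 1.
Proof.
have Hf : 0 < INR N`! by apply: lt_0_INR; apply/ltP; apply: fact_gt0.
rewrite /Prob; apply/Rle_div_l => //; rewrite Rmult_1_l -card_Sn.
by apply/le_INR/leP/max_card.
Qed.

Theorem theorem1 (N : nat) (x : 'I_N -> R) (a b : R) (n : nat) (eps : R) :
  (2 <= N)%N ->
  (forall i, a <= x i) -> (exists i, x i = a) ->
  (forall i, x i <= b) -> (exists i, x i = b) ->
  (1 <= n)%N -> (n < N)%N -> 0 < eps ->
  Prob (fun s : {perm 'I_N} =>
          exists k : nat, (n <= k <= N.-1)%N /\ psum x s k / INR k >= eps)
    <= exp (- (2 * INR n * eps ^ 2)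
              / ((1 - INR n / INR N) * (1 + 1 / INR n) * (b - a) ^ 2))
  /\
  Prob (fun s : {perm 'I_N} =>
          exists k : nat, (1 <= k <= n)%N /\
             psum x s k / INR (N - k)%N >= INR n * eps / INR (N - n)%N)
    <= exp (- (2 * INR n * eps ^ 2)
              / ((1 - (INR n - 1) / INR N) * (b - a) ^ 2)).
Proof.
move=> HN Ha [ia _] Hb _ Hn1 HnN Heps.
have HnR : 1 <= INR n by rewrite -/(INR 1); apply/le_INR/leP.
have HNn : INR (N - n) = INR N - INR n by rewrite minus_INR //; apply/leP; lia.
have HNnR : 0 < INR (N - n) by apply: lt_0_INR; apply/ltP; lia.
have [Hab|Hab] : a < b \/ a = b by have := Ha ia; have := Hb ia; lra.
2: { (* A constant population: both bounds are exp 0 = 1. *)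
  have Hw : (b - a) ^ 2 = 0 by rewrite Hab; ring.
  by rewrite Hw !Rmult_0_r /Rdiv Rinv_0 !Rmult_0_r exp_0; split; apply: Prob_le1. }
split.
- (* Reverse time and apply the maximal inequality to -x with M = N - n. *)
  rewrite Prob_reverse; [|lia|lia].
  have Hy i : - b <= - x i <= - a by have := Ha i; have := Hb i; lra.
  apply: (Rle_trans _ _ _ (maximal_bound_explicit N _ _ _ (N - n) eps
    (Ropp_lt_contravar _ _ Hab) Hy _ _ Heps));
    [lia | lia |].
  right; congr exp; rewrite (_ : (N - (N - n) = n)%N); last by lia.
  by rewrite HNn; field; repeat split; lra.
-
  have Hc : 0 < INR n * eps / INR (N - n) by apply: Rdiv_lt_0_compat; nra.
  have Hx i : a <= x i <= b by split.
  apply: (Rle_trans _ _ _ (maximal_bound_explicit N x a b n _ Hab Hx Hn1 HnN Hc)).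
  by right; congr exp; rewrite HNn; field; repeat split; lra.
Qed.
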